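(* Let $G=\langle x\rangle$ be a finite cyclic group. Then $G$ admits a $2$-PDR of valency $3$ if and only if $o(x)\geq 5$.
   Context: For a group $G$ and an integer $m\geq 2$, write $g_i$ for the element $(g,i)$ of $G\times\mathbb{Z}_m$. Given subsets $T_{i,j}\subseteq G$ for $i,j\in\mathbb{Z}_m$, the $m$-Cayley digraph $\mathrm{Cay}(G,T_{i,j}:i,j\in\mathbb{Z}_m)$ is the digraph with vertex set $G\times\mathbb{Z}_m$ and arc set $\bigcup_{i,j\in\mathbb{Z}_m}\{(g_i,(tg)_j): t\in T_{i,j},\, g\in G\}$. It is called an $m$-partite Cayley digraph if $T_{i,i}=\emptyset$ for all $i\in\mathbb{Z}_m$. A digraph is regular of valency $k$ if every vertex has out-valency $k$ and in-valency $k$. A group $G$ admits an $m$-PDR of valency $k$ if there exists an $m$-partite Cayley digraph $\Gamma$ over $G$ which is regular of valency $k$ and whose full automorphism group $\mathrm{Aut}(\Gamma)$ is isomorphic to $G$. $o(x)$ denotes the order of $x$. *)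

From mathcomp Require Import all_boot all_fingroup.
Set Implicit Arguments. Unset Strict Implicit. Unset Printing Implicit Defensive.
Local Open Scope group_scope.

(* Vertices of an m-Cayley digraph over gT: pairs (g, i) = g_i with i in Z_m,
   represented by 'I_m (m >= 2 is assumed where used). *)
Definition mvertex (gT : finGroupType) (m : nat) := (gT * 'I_m)%type.

Definition mcay_arc (gT : finGroupType) (m : nat) (T : 'I_m -> 'I_m -> {set gT})
  (u v : mvertex gT m) : bool :=
  [exists t in T u.2 v.2, v.1 == t * u.1].

Definition mpartite (gT : finGroupType) (m : nat) (T : 'I_m -> 'I_m -> {set gT}) :=
  forall i : 'I_m, T i i = set0.

Definition regular_valency (gT : finGroupType) (m : nat)
  (T : 'I_m -> 'I_m -> {set gT}) (k : nat) :=
  forall u : mvertex gT m,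
    #|[set v | mcay_arc T u v]| = k /\ #|[set v | mcay_arc T v u]| = k.

Definition mcay_Aut (gT : finGroupType) (m : nat) (T : 'I_m -> 'I_m -> {set gT})
  : {set {perm mvertex gT m}} :=
  [set s : {perm mvertex gT m} |
     [forall u, forall v, mcay_arc T u v == mcay_arc T (s u) (s v)]].

Definition admits_mPDR (gT : finGroupType) (m k : nat) :=
  exists T : 'I_m -> 'I_m -> {set gT},
    [/\ mpartite T, regular_valency T k & mcay_Aut T \isog [set: gT]].

From mathcomp Require Import all_boot all_fingroup cyclic zify.
Set Implicit Arguments. Unset Strict Implicit. Unset Printing Implicit Defensive.
Local Open Scope group_scope.

(* Right translations (g, i) |-> (g h, i) are automorphisms of every m-Cayley
   digraph, so Aut is isomorphic to G exactly when every automorphism is a right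
   translation.  If |G| <= 4, the two connection sets of a 2-partite digraph of
   valency 3 each miss at most one element, so they are two-sided translates of
   each other and some automorphism exchanges the two parts, which no right
   translation does.  If o(x) >= 5, take T_{0,1} = {1, x, x^2} and
   T_{1,0} = {x^-2, x^-1, x}: every vertex u has a unique out-neighbour next u
   that is not an in-neighbour, next^2 is left multiplication by x, and
   u -> next^3 u is an arc exactly when u lies in part 0.  An automorphism thus
   commutes with next and fixes the parts, so it is determined by the image of
   (1, 0); as x generates G, it is a right translation. *)

Lemma ord2_neq (i j : 'I_2) : j != i -> j = rev_ord i.
Proof. by case: i j => [[|[|?]] ?] [[|[|?]] ?] //= _; apply: val_inj. Qed.

Lemma rev_ord2_neq (i : 'I_2) : rev_ord i != i.
Proof. by case: i => [[|[|?]] ?]. Qed.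

Section RightTranslations.

Variables (gT : finGroupType) (m : nat) (T : 'I_m -> 'I_m -> {set gT}).
Hypothesis m_gt0 : 0 < m.

Lemma mcay_arcE g i h j : mcay_arc T (g, i) (h, j) = (h * g^-1 \in T i j).
Proof.
rewrite /mcay_arc /=; apply/existsP/idP => [[t /andP[Tt /eqP->]] | Thg].
  by rewrite mulgK.
by exists (h * g^-1); rewrite Thg mulgKV eqxx.
Qed.

Lemma mcay_Aut_group_set : group_set (mcay_Aut T).
Proof.
apply/group_setP; split=> [|s t]; rewrite !inE.
  by apply/forallP => u; apply/forallP => v; rewrite !perm1.
move=> /forallP sA /forallP tA; apply/forallP => u; apply/forallP => v.
by rewrite !permM (eqP (forallP (sA u) v)) (eqP (forallP (tA (s u)) (s v))).
Qed.

Canonical mcay_Aut_group := Group mcay_Aut_group_set.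

Lemma mcay_arc_Aut s u v :
  s \in mcay_Aut T -> mcay_arc T (s u) (s v) = mcay_arc T u v.
Proof. by rewrite inE => /forallP/(_ u)/forallP/(_ v)/eqP. Qed.

Definition rtrans_fun (h : gT) (u : mvertex gT m) : mvertex gT m := (u.1 * h, u.2).

Lemma rtrans_fun_inj h : injective (rtrans_fun h).
Proof. by move=> [g i] [g' j] [/mulIg-> ->]. Qed.

Definition rtrans h : {perm mvertex gT m} := perm (@rtrans_fun_inj h).

Lemma rtransE h u : rtrans h u = (u.1 * h, u.2).
Proof. by rewrite permE. Qed.

Lemma rtrans_Aut h : rtrans h \in mcay_Aut T.
Proof.
rewrite inE; apply/forallP => -[g i]; apply/forallP => -[g' j].
by rewrite !rtransE !mcay_arcE invMg mulgA mulgK.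
Qed.

Lemma rtransM : {in [set: gT] &, {morph rtrans : a b / a * b}}.
Proof. by move=> a b _ _; apply/permP => u; rewrite permM !rtransE mulgA. Qed.

Canonical rtrans_morphism := Morphism rtransM.

Lemma injm_rtrans : 'injm rtrans_morphism.
Proof.
apply/injmP => a b _ _ /permP/(_ (1, Ordinal m_gt0)).
by rewrite !rtransE => -[/mulgI].
Qed.

Lemma mcay_Aut_isogP :
  mcay_Aut T \isog [set: gT] <-> mcay_Aut T \subset rtrans @* [set: gT].
Proof.
have rtrans_sub : rtrans @* [set: gT] \subset mcay_Aut T.
  by apply/subsetP => _ /morphimP[h _ _ ->]; apply: rtrans_Aut.
have card_rtrans : #|rtrans_morphism @* [set: gT]| = #|gT|.
  by rewrite card_injm ?injm_rtrans ?cardsT.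
split=> [isoA | AutE].
  have card_Aut : #|mcay_Aut T| <= #|rtrans @* [set: gT]|.
    by rewrite card_rtrans (card_isog isoA) cardsT.
  by have /eqP <- : rtrans @* [set: gT] == mcay_Aut T by rewrite eqEcard rtrans_sub.
have -> : mcay_Aut T = rtrans @* [set: gT] by apply/eqP; rewrite eqEsubset AutE.
by rewrite isog_sym sub_isog ?injm_rtrans.
Qed.

End RightTranslations.

Arguments rtrans {gT m} h.

Section TwoPartite.

Variables (gT : finGroupType) (T : 'I_2 -> 'I_2 -> {set gT}).
Hypothesis T_partite : mpartite T.

Lemma mpartite2_arcE g i h j :
  mcay_arc T (g, i) (h, j) = (j == rev_ord i) && (h * g^-1 \in T i j).
Proof.
rewrite mcay_arcE; have [->|ji] := eqVneq j i; last by rewrite (ord2_neq ji) eqxx.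
by rewrite T_partite inE andbF.
Qed.

Lemma mpartite2_out g i :
  [set v | mcay_arc T (g, i) v] = [set (t * g, rev_ord i) | t in T i (rev_ord i)].
Proof.
apply/setP => -[h j]; rewrite inE mpartite2_arcE.
apply/andP/imsetP => [[/eqP-> Thg] | [t Tt [-> ->]]]; last by rewrite eqxx mulgK.
by exists (h * g^-1); rewrite ?mulgKV.
Qed.

Lemma mpartite2_in g i :
  [set v | mcay_arc T v (g, i)] = [set (t^-1 * g, rev_ord i) | t in T (rev_ord i) i].
Proof.
apply/setP => -[h j]; rewrite inE mpartite2_arcE -(inj_eq rev_ord_inj) rev_ordK.
apply/andP/imsetP => [[/eqP<- Tgh] | [t Tt [-> ->]]].
  by exists (g * h^-1); rewrite ?invMg ?invgK ?mulgKV.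
by rewrite eqxx invMg invgK mulKVg.
Qed.

Lemma regular2P k : regular_valency T k <-> forall i, #|T i (rev_ord i)| = k.
Proof.
have out_inj (g : gT) (i : 'I_2) : injective (fun t : gT => (t * g, rev_ord i)).
  by move=> a b [] /mulIg.
have in_inj (g : gT) (i : 'I_2) : injective (fun t : gT => (t^-1 * g, rev_ord i)).
  by move=> a b [] /mulIg/invg_inj.
split=> [reg i | cardT [g i]].
  by case: (reg (1, i)) => <- _; rewrite mpartite2_out (card_imset _ (out_inj 1 i)).
rewrite mpartite2_out mpartite2_in (card_imset _ (out_inj g i)).
by rewrite (card_imset _ (in_inj g i)) cardT -{2}(rev_ordK i) cardT.
Qed.

Definition vswap_fun (c : 'I_2 -> gT) (u : mvertex gT 2) : mvertex gT 2 :=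
  (c u.2 * u.1, rev_ord u.2).

Lemma vswap_fun_inj c : injective (vswap_fun c).
Proof.
move=> [g i] [h j]; rewrite /vswap_fun /= => /pair_equal_spec[+ /rev_ord_inj ji].
by rewrite ji => /mulgI->.
Qed.

Definition vswap c : {perm mvertex gT 2} := perm (@vswap_fun_inj c).

Lemma vswapE c u : vswap c u = (c u.2 * u.1, rev_ord u.2).
Proof. by rewrite permE. Qed.

Lemma vswap_Aut c :
    (forall i y, (y \in T i (rev_ord i)) =
                 (c (rev_ord i) * y * (c i)^-1 \in T (rev_ord i) i)) ->
  vswap c \in mcay_Aut T.
Proof.
move=> cT; rewrite inE; apply/forallP => -[g i]; apply/forallP => -[h j].
rewrite !vswapE !mpartite2_arcE (inj_eq rev_ord_inj).
have [-> /=|//] := eqVneq j (rev_ord i).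
by rewrite rev_ordK cT invMg !mulgA.
Qed.

End TwoPartite.

Lemma cardsC_le1_translates (gT : finGroupType) (A B : {set gT}) :
    #|~: A| = #|~: B| -> #|~: A| <= 1 ->
  exists a b, (forall y, (y \in A) = (b * y * a^-1 \in B))
           /\ (forall y, (y \in B) = (a * y * b^-1 \in A)).
Proof.
have cancel_neq (a b y : gT) : (b * y * a^-1 != b) = (y != a).
  by rewrite -{2}[b]mulg1 -mulgA (inj_eq (mulgI b)) -eq_mulgV1.
move=> cardAB; rewrite leq_eqVlt ltnS leqn0 => /orP[] cardA;
  move: (cardA); rewrite cardAB => cardB.
  move: cardA cardB => /cards1P[a eqA] /cards1P[b eqB].
  rewrite -[A]setCK -[B]setCK eqA eqB.
  by exists a, b; split=> y; rewrite !inE cancel_neq.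
rewrite !cards_eq0 in cardA cardB.
rewrite -[A]setCK -[B]setCK (eqP cardA) (eqP cardB) setC0.
by exists 1, 1; split=> y; rewrite !inE.
Qed.

Lemma mPDR2_3_card_gt4 (gT : finGroupType) : admits_mPDR gT 2 3 -> 4 < #|gT|.
Proof.
case=> T [T_part /(regular2P T_part) cardT /(mcay_Aut_isogP _ (ltn0Sn 1)) AutE].
rewrite ltnNge; apply/negP => small.
pose i0 : 'I_2 := ord0; pose i1 := rev_ord i0.
have cardT10 : #|T i1 i0| = 3 by rewrite -(cardT i1) rev_ordK.
have card01 := cardsC (T i0 i1); have card10 := cardsC (T i1 i0).
rewrite cardT10 in card10; rewrite cardT in card01.
move: small; rewrite -card01 => small.
have cardC01 : #|~: T i0 i1| = #|~: T i1 i0| by lia.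
have cardC_le1 : #|~: T i0 i1| <= 1 by lia.
have [a [b [Ta Tb]]] := cardsC_le1_translates cardC01 cardC_le1.
pose c i := if i == i0 then a else b.
have c_Aut : vswap c \in mcay_Aut T.
  apply: vswap_Aut => // i y; have [->|/ord2_neq->] := eqVneq i i0.
    by rewrite /c (negbTE (rev_ord2_neq i0)) eqxx Ta.
  by rewrite rev_ordK /c (negbTE (rev_ord2_neq i0)) eqxx Tb.
have /morphimP[h _ _ /permP/(_ (1, i0))] := subsetP AutE _ c_Aut.
by rewrite vswapE rtransE => -[].
Qed.

Section CyclicConstruction.

Variables (gT : finGroupType) (x : gT).
Hypotheses (x_gt4 : 4 < #[x]) (x_gen : <[x]> = [set: gT]).

Definition cycT (i j : 'I_2) : {set gT} :=
  if i == j then set0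
  else if i == ord0 then [set 1; x; x ^+ 2] else [set x ^- 2; x^-1; x].

Lemma cycT_partite : mpartite cycT.
Proof. by move=> i; rewrite /cycT eqxx. Qed.

(* [xpow_m2 k] is x^(k-2): the elements x^-2, ..., x^2 occurring in [cycT]
   are indexed by k < 5, where distinct indices give distinct elements. *)
Definition xpow_m2 k := x ^+ k * x ^- 2.

Lemma xpow_m2_eq a b : a < 5 -> b < 5 -> (xpow_m2 a == xpow_m2 b) = (a == b).
Proof.
move=> a5 b5; rewrite (inj_eq (mulIg _)) eq_expg_mod_order.
by rewrite !modn_small // (leq_trans _ x_gt4).
Qed.

Lemma xpow_m2V k : k <= 4 -> (xpow_m2 k)^-1 = xpow_m2 (4 - k).
Proof.
move=> k4; rewrite /xpow_m2 invMg invgK.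
have -> : x ^+ (4 - k) = x ^+ 2 * x ^+ 2 * x ^- k.
  by rewrite -expgD -[2 + 2]/4 -{2}(subnK k4) expgD mulgK.
have cx2k : commute (x ^+ 2) (x ^- k) by apply/commuteV/commuteX2.
by rewrite -(mulgA (x ^+ 2) (x ^+ 2)) {2}cx2k mulgA mulgK.
Qed.

Lemma xpow_m2_add2 k : xpow_m2 k.+2 = x ^+ k.
Proof. by rewrite /xpow_m2 -addn2 expgD mulgK. Qed.

Lemma cycT_xpow_m2 i :
  cycT i (rev_ord i) = if i == ord0 then [set xpow_m2 2; xpow_m2 3; xpow_m2 4]
                       else [set xpow_m2 0; xpow_m2 1; xpow_m2 3].
Proof.
have p0 : xpow_m2 0 = x ^- 2 by rewrite /xpow_m2 mul1g.
have p1 : xpow_m2 1 = x ^-1 by rewrite /xpow_m2 expg1 expgS expg1 invMg mulKVg.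
by rewrite /cycT eq_sym (negbTE (rev_ord2_neq i)) p0 p1 !xpow_m2_add2 expg0 expg1.
Qed.

Definition cyc_step (i : 'I_2) := if i == ord0 then 1 else x.

Lemma cycT_unreciprocated i y :
  (y \in cycT i (rev_ord i)) && (y^-1 \notin cycT (rev_ord i) i) = (y == cyc_step i).
Proof.
have := cycT_xpow_m2 (rev_ord i); rewrite rev_ordK cycT_xpow_m2 => ->.
have -> : cyc_step i = if i == ord0 then xpow_m2 2 else xpow_m2 3.
  by rewrite !xpow_m2_add2 expg0 expg1.
have [->|/ord2_neq->] := eqVneq i ord0;
  rewrite ?rev_ordK ?eqxx ?(negbTE (rev_ord2_neq _)).
all: rewrite !inE; apply/andP/eqP => [[/orP[/orP[]|]/eqP-> //] | ->].
all: by rewrite xpow_m2V // !xpow_m2_eq.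
Qed.

Lemma cycT_card i : #|cycT i (rev_ord i)| = 3.
Proof.
by rewrite cycT_xpow_m2; case: ifP => _; rewrite -setUA cardsU1 cards2 !inE !xpow_m2_eq.
Qed.

Definition cyc_next := vswap cyc_step.

Lemma cyc_arc_unreciprocated u v :
  mcay_arc cycT u v && ~~ mcay_arc cycT v u = (v == cyc_next u).
Proof.
case: u v => [g i] [h j]; rewrite !(mpartite2_arcE cycT_partite) vswapE /=.
have [-> /=|ji] := eqVneq j (rev_ord i); last by rewrite xpair_eqE (negbTE ji) andbF.
have -> : g * h^-1 = (h * g^-1)^-1 by rewrite invMg invgK.
rewrite rev_ordK eqxx /= cycT_unreciprocated xpair_eqE eqxx andbT.
by apply/eqP/eqP => [<-|->]; rewrite ?mulgKV ?mulgK.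
Qed.

Lemma cyc_next_Aut s u : s \in mcay_Aut cycT -> s (cyc_next u) = cyc_next (s u).
Proof.
move=> sA; apply/eqP.
by rewrite -cyc_arc_unreciprocated !(mcay_arc_Aut _ _ sA) cyc_arc_unreciprocated.
Qed.

Lemma cyc_next2 u : cyc_next (cyc_next u) = (x * u.1, u.2).
Proof.
case: u => g i; rewrite !vswapE /= rev_ordK mulgA /cyc_step.
have [->|/ord2_neq->] := eqVneq i ord0;
  by rewrite ?rev_ordK ?eqxx ?(negbTE (rev_ord2_neq _)) ?mulg1 ?mul1g.
Qed.

Lemma cyc_arc_next3 u : mcay_arc cycT u (iter 3 cyc_next u) = (u.2 == ord0).
Proof.
case: u => g i /=; rewrite cyc_next2 vswapE /= (mpartite2_arcE cycT_partite).
rewrite eqxx mulgA mulgK /=.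
rewrite cycT_xpow_m2 /cyc_step; case: eqVneq => _.
  by rewrite mulg1 -[x]expg1 -xpow_m2_add2 !inE eqxx orbT.
by rewrite -[x * x]/(x ^+ 2) -xpow_m2_add2 !inE !xpow_m2_eq.
Qed.

Lemma cyc_Aut_iter s n u :
  s \in mcay_Aut cycT -> s (iter n cyc_next u) = iter n cyc_next (s u).
Proof. by move=> sA; elim: n => //= n <-; apply: cyc_next_Aut. Qed.

Lemma cyc_Aut_part0 s u : s \in mcay_Aut cycT -> ((s u).2 == ord0) = (u.2 == ord0).
Proof.
by move=> sA; rewrite -!cyc_arc_next3 -(cyc_Aut_iter _ _ sA) (mcay_arc_Aut _ _ sA).
Qed.

Lemma cyc_next_orbit u : exists n, u = iter n cyc_next (1, ord0).
Proof.
case: u => g i; have /cycleP[k ->] : g \in <[x]> by rewrite x_gen inE.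
have iter_double : iter k.*2 cyc_next (1, ord0) = (x ^+ k, ord0).
  by elim: k => [|k IHk]; rewrite ?doubleS //= IHk cyc_next2 expgS.
have [->|/ord2_neq->] := eqVneq i ord0; first by exists k.*2.
by exists k.*2.+1; rewrite /= iter_double vswapE /cyc_step eqxx mul1g.
Qed.

Lemma cyc_Aut_sub : mcay_Aut cycT \subset rtrans @* [set: gT].
Proof.
apply/subsetP => s sA; have := cyc_Aut_part0 (1, ord0) sA.
case Es: (s (1, ord0)) => [h i] /= /eqP i0; apply/morphimP; exists h => //.
apply/permP => u; have [n ->] := cyc_next_orbit u.
by rewrite !cyc_Aut_iter ?rtrans_Aut // Es rtransE mul1g i0.
Qed.

Lemma cyc_admits_mPDR : admits_mPDR gT 2 3.
Proof.
exists cycT; split; first exact: cycT_partite.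
  by apply/(regular2P cycT_partite); apply: cycT_card.
exact/(mcay_Aut_isogP _ (ltn0Sn 1))/cyc_Aut_sub.
Qed.

End CyclicConstruction.

Theorem lemma3p2 (gT : finGroupType) (x : gT) :
  <[x]> = [set: gT] -> (admits_mPDR gT 2 3 <-> 5 <= #[x])%N.
Proof.
move=> x_gen; split=> [/mPDR2_3_card_gt4 | x_gt4].
  by rewrite /order x_gen cardsT.
exact: cyc_admits_mPDR x_gt4 x_gen.
Qed.
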